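(* Assume $\mathrm{recc}(C)\subseteq\mathrm{recc}(P^B)$ and fix $k\in N_2$. Then $k\notin J$, i.e., $\bar r^k\notin\mathrm{recc}(S_k^C)$.
   Context: Let $A\in\mathbb{R}^{m\times n}$ have full row rank, $b\in\mathbb{R}^m$, and $P=\{x\in\mathbb{R}^n_+:Ax=b\}$. Let $C\subseteq\mathbb{R}^n$ be an open convex set. Fix a basis $B$ of $P$ with nonbasic set $N=\{1,\dots,n\}\setminus B$. Write $P=\{x:x_i=\bar b_i-\sum_{j\in N}\bar a_{ij}x_j\ (i\in B),\ x\ge0\}$ with $\bar b\ge0$. The basic solution $\bar x$ has $\bar x_i=\bar b_i$ ($i\in B$) and $0$ ($i\in N$). $P^B$ is obtained by dropping $x_i\ge0$ for $i\in B$. For $j\in N$, $\bar r^j$ has $\bar r^j_k=-\bar a_{kj}$ ($k\in B$), $\bar r^j_j=1$, and $0$ otherwise. Thus $P^B=\{\bar x+\sum_{j\in N}x_j\bar r^j:x_j\ge0\}$. It is assumed that $\bar x\notin\mathrm{cl}(C)$. For $j\in N$, $\alpha_j=\inf\{\lambda\ge0:\bar x+\lambda\bar r^j\in C\}$ and $\beta_j=\sup\{\lambda\ge0:\bar x+\lambda\bar r^j\in C\}$, with $\alpha_j=+\infty$, $\beta_j=-\infty$ if the halfline misses $C$. Let $N_2=\{j:\alpha_j\in(0,\infty),\beta_j\in(\alpha_j,\infty)\}$. For a set $K$, $\mathrm{recc}(K)=\{d:x+\lambda d\in K\ \forall x\in K,\lambda\ge0\}$. For $k\in N_2$, $S_k^C=\{\bar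 x\}+\mathrm{conv}\big(\bigcup_{j\in N_2}\{\lambda\bar r^j:0\le\lambda<\beta_j\}\big)+\{\lambda\bar r^k:\lambda\le0\}+\mathrm{recc}(C)$, and $J=\{i\in N:\bar r^i\in\mathrm{recc}(S_k^C)\}$. *)

From HB Require Import structures.
From mathcomp Require Import all_boot all_order all_algebra.
From mathcomp Require Import all_classical all_reals all_analysis.
Set Implicit Arguments. Unset Strict Implicit. Unset Printing Implicit Defensive.
Import Order.TTheory GRing.Theory Num.Theory.
Import numFieldNormedType.Exports.
Local Open Scope classical_set_scope.
Local Open Scope ring_scope.

Section Setting.
Variables (R : realType) (m n : nat).
(* A : constraint matrix, b : right-hand side, Bf : the basis (an ordering of
   the basic indices, B = image of Bf). *)
Variables (A : 'M[R]_(m, n)) (b : 'cV[R]_m) (Bf : 'I_m -> 'I_n).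

Definition AB : 'M[R]_m := colsub Bf A.
(* tableau data: Abar = A_B^{-1} A, bbar = A_B^{-1} b; row k corresponds
   to basic variable Bf k *)
Definition Abar : 'M[R]_(m, n) := invmx AB *m A.
Definition bbar : 'cV[R]_m := invmx AB *m b.

Definition Bset : {set 'I_n} := [set Bf k | k : 'I_m].
Definition Nset : {set 'I_n} := ~: Bset.

Definition xbar : 'rV[R]_n :=
  \row_i (match [pick k | Bf k == i] with Some k => bbar k 0 | None => 0 end).

Definition rbar (j : 'I_n) : 'rV[R]_n :=
  \row_i (match [pick k | Bf k == i] with
          | Some k => - Abar k j
          | None => if i == j then 1 else 0 end).

Definition Ppoly : set 'rV[R]_n :=
  [set x : 'rV[R]_n | (forall i, 0 <= x 0 i) /\ A *m x^T = b].

Definition PB : set 'rV[R]_n :=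
  [set x : 'rV[R]_n | exists lam : 'I_n -> R, (forall j, j \in Nset -> 0 <= lam j) /\
           x = xbar + \sum_(j in Nset) lam j *: rbar j].

End Setting.

Definition recc (R : realType) (n : nat) (K : set 'rV[R]_n) : set 'rV[R]_n :=
  [set d : 'rV[R]_n | forall x, K x -> forall l : R, 0 <= l -> K (x + l *: d)].

Definition is_convex (R : realType) (n : nat) (K : set 'rV[R]_n) : Prop :=
  forall x y (t : R), K x -> K y -> 0 <= t -> t <= 1 -> K ((1 - t) *: x + t *: y).

Definition conv_hull (R : realType) (n : nat) (U : set 'rV[R]_n) : set 'rV[R]_n :=
  [set x : 'rV[R]_n | exists (p : nat) (w : 'I_p -> R) (y : 'I_p -> 'rV[R]_n),
     (forall i, 0 <= w i) /\ \sum_(i < p) w i = 1 /\ (forall i, U (y i)) /\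
     x = \sum_(i < p) w i *: y i].

Section Alphabeta.
Variables (R : realType) (n : nat) (C : set 'rV[R]_n) (x0 : 'rV[R]_n).

(* alpha_j = inf {l >= 0 : x0 + l r in C}, beta = sup; conventions
   inf empty = +oo, sup empty = -oo are those of ereal_inf / ereal_sup *)
Definition alpha (r : 'rV[R]_n) : \bar R :=
  ereal_inf [set l%:E | l in [set l : R | 0 <= l /\ C (x0 + l *: r)]].
Definition beta (r : 'rV[R]_n) : \bar R :=
  ereal_sup [set l%:E | l in [set l : R | 0 <= l /\ C (x0 + l *: r)]].
End Alphabeta.

Section SkC.
Variables (R : realType) (m n : nat) (A : 'M[R]_(m, n)) (b : 'cV[R]_m)
  (Bf : 'I_m -> 'I_n) (C : set 'rV[R]_n).

Local Notation xb := (xbar A b Bf).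
Local Notation rb := (rbar A Bf).

Definition N2 : set 'I_n :=
  [set j | j \in Nset Bf /\
     (0 < alpha C xb (rb j))%E /\ (alpha C xb (rb j) < +oo)%E /\
     (alpha C xb (rb j) < beta C xb (rb j))%E /\ (beta C xb (rb j) < +oo)%E].

Definition SkC (k : 'I_n) : set 'rV[R]_n :=
  [set x : 'rV[R]_n | exists c (l : R) d,
     conv_hull [set y | exists j l', N2 j /\ 0 <= l' /\
                  (l'%:E < beta C xb (rb j))%E /\ y = l' *: rb j] c /\
     l <= 0 /\ recc C d /\
     x = xb + c + l *: rb k + d].

Definition Jset (k : 'I_n) : set 'I_n :=
  [set i | i \in Nset Bf /\ recc (SkC k) (rb i)].
End SkC.

(* Suppose [rbar k] recedes in [S_k^C].  Since [xbar] lies in [S_k^C], so does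
   [xbar + t rbar k] for any [t > beta_k]; write [t rbar k = c + l rbar k + d]
   as in the definition of [S_k^C].  On nonbasic coordinates the convex part
   [c] is nonnegative with [c_k <= beta_k], [l <= 0], and [d], a recession
   direction of [C] and hence of [P^B], is a nonnegative combination of the
   rays.  Comparing coordinates forces [d = d_k rbar k] with [d_k > 0], so
   [rbar k] recedes in [C] and the halfline meets [C] in an unbounded set,
   i.e. [beta_k = +oo]. *)
From HB Require Import structures.
From mathcomp Require Import all_boot all_order all_algebra.
From mathcomp Require Import all_classical all_reals all_analysis.
From mathcomp Require Import lra.
Set Implicit Arguments. Unset Strict Implicit. Unset Printing Implicit Defensive.
Import Order.TTheory GRing.Theory Num.Theory.
Import numFieldNormedType.Exports.
Local Open Scope classical_set_scope.
Local Open Scope ring_scope.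

Section ConvHull.
Variables (R : realType) (n : nat) (U : set 'rV[R]_n) (j : 'I_n).

Lemma conv_hull_coord_le (M : R) c :
  (forall y, U y -> y 0 j <= M) -> conv_hull U c -> c 0 j <= M.
Proof.
move=> UM [p [w [y [w0 [w1 [Uy ->]]]]]].
rewrite summxE -[M]mul1r -w1 mulr_suml; apply: ler_sum => i _.
by rewrite mxE ler_wpM2l ?UM.
Qed.

Lemma conv_hull_coord_ge (M : R) c :
  (forall y, U y -> M <= y 0 j) -> conv_hull U c -> M <= c 0 j.
Proof.
move=> UM [p [w [y [w0 [w1 [Uy ->]]]]]].
rewrite summxE -[M]mul1r -w1 mulr_suml; apply: ler_sum => i _.
by rewrite mxE ler_wpM2l ?UM.
Qed.

End ConvHull.

Section HalfLine.
Variables (R : realType) (n : nat) (C : set 'rV[R]_n) (x r : 'rV[R]_n).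

Lemma alpha_lt_pinfty_meets :
  (alpha C x r < +oo)%E -> exists l, 0 <= l /\ C (x + l *: r).
Proof.
apply: contraPP => miss; rewrite /alpha.
suff -> : [set l%:E | l in [set l : R | 0 <= l /\ C (x + l *: r)]] = set0.
  by rewrite ereal_inf0.
by apply/seteqP; split => // z [l Cl _]; apply: miss; exists l.
Qed.

Lemma beta_ge (l : R) : 0 <= l -> C (x + l *: r) -> (l%:E <= beta C x r)%E.
Proof. by move=> l0 Cl; apply: ereal_sup_ubound; exists l. Qed.

Lemma beta_recc_pinfty (s : R) :
  0 < s -> recc C (s *: r) -> (alpha C x r < +oo)%E -> beta C x r = +oo%E.
Proof.
move=> s0 rC /alpha_lt_pinfty_meets [l [l0 Cl]].
have Cfar u : 0 <= u -> C (x + (l + u * s) *: r).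
  by move=> u0; rewrite scalerDl -scalerA addrA; apply: rC.
have := beta_ge l0 Cl; case Eb: (beta C x r) => [bb | // | //] _.
have u0 : 0 <= (`|bb| + 1) / s by rewrite divr_ge0 // ltW.
have := beta_ge (addr_ge0 l0 (mulr_ge0 u0 (ltW s0))) (Cfar _ u0).
rewrite Eb lee_fin divfK ?gt_eqF // => bbl.
exfalso; have := Num.Theory.ler_norm bb; lra.
Qed.

End HalfLine.

Section Tableau.
Variables (R : realType) (m n : nat) (A : 'M[R]_(m, n)) (b : 'cV[R]_m)
  (Bf : 'I_m -> 'I_n).

Local Notation rb := (rbar A Bf).
Local Notation N := (Nset Bf).

Lemma rbar_nonbasic (j j' : 'I_n) : j \in N -> rb j' 0 j = (j == j')%:R.
Proof.
move=> jN; rewrite mxE; case: pickP => [k /eqP Bk | _]; last by case: eqP.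
by move: jN; rewrite /Nset inE -Bk imset_f.
Qed.

Lemma cone_rbar_nonbasic (lam : 'I_n -> R) (j : 'I_n) : j \in N ->
  (\sum_(j' in N) lam j' *: rb j') 0 j = lam j.
Proof.
move=> jN; rewrite summxE (bigD1 j) //= big1 => [|i /andP[_ ij]].
  by rewrite mxE rbar_nonbasic // eqxx mulr1 addr0.
by rewrite mxE rbar_nonbasic // eq_sym (negbTE ij) mulr0.
Qed.

Lemma PB_xbar : PB A b Bf (xbar A b Bf).
Proof.
exists (fun=> 0); split => //.
by rewrite big1 ?addr0 // => j _; rewrite scale0r.
Qed.

Lemma recc_PB_cone d : recc (PB A b Bf) d ->
  (forall j, j \in N -> 0 <= d 0 j) /\ d = \sum_(j in N) d 0 j *: rb j.
Proof.
move=> /(_ _ PB_xbar 1 ler01) [lam [lam0 /addrI]]; rewrite scale1r => ->.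
have dN j : j \in N -> (\sum_(j' in N) lam j' *: rb j') 0 j = lam j.
  exact: cone_rbar_nonbasic.
split=> [j jN | ]; first by rewrite dN ?lam0.
by apply: eq_bigr => j jN; rewrite dN.
Qed.

End Tableau.

Section SkC.
Variables (R : realType) (m n : nat) (A : 'M[R]_(m, n)) (b : 'cV[R]_m)
  (Bf : 'I_m -> 'I_n) (C : set 'rV[R]_n).

Local Notation xb := (xbar A b Bf).
Local Notation rb := (rbar A Bf).
Local Notation N := (Nset Bf).
Local Notation N2 := (N2 A b Bf C).

Definition N2_segments : set 'rV[R]_n :=
  [set y | exists j l', N2 j /\ 0 <= l' /\ (l'%:E < beta C xb (rb j))%E /\
     y = l' *: rb j].

Lemma N2_segments_nonbasic y j : N2_segments y -> j \in N -> 0 <= y 0 j.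
Proof.
by move=> [j' [l' [_ [l'0 [_ ->]]]]] jN; rewrite mxE rbar_nonbasic // mulr_ge0.
Qed.

Lemma N2_segments_coord_le k (bb : R) y : k \in N ->
  beta C xb (rb k) = bb%:E -> 0 <= bb -> N2_segments y -> y 0 k <= bb.
Proof.
move=> kN Eb bb0 [j [l' [_ [l'0 [lb ->]]]]]; rewrite mxE rbar_nonbasic //.
have [kj | _] := eqVneq k j; last by rewrite mulr0.
by rewrite mulr1 -lee_fin -Eb kj ltW.
Qed.

Lemma N2_beta_gt0 j : N2 j -> exists2 bb : R, 0 < bb & beta C xb (rb j) = bb%:E.
Proof.
move=> [_ [a0 [_ [ab boo]]]]; have b0 := lt_trans a0 ab.
exists (fine (beta C xb (rb j))); last by rewrite fineK // ge0_fin_numE // ltW.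
by rewrite -lte_fin fineK // ge0_fin_numE // ltW.
Qed.

Lemma SkC_xbar k : N2 k -> SkC A b Bf C k xb.
Proof.
move=> N2k; have [bb bb0 Eb] := N2_beta_gt0 N2k.
exists 0, 0, 0; split; [|split => //; split].
- exists 1%N, (fun=> 1), (fun=> 0); rewrite !big_ord1 scaler0; do !split => //.
  by exists k, 0; rewrite scale0r Eb lte_fin.
- by move=> y Cy l _; rewrite scaler0 addr0.
- by rewrite scale0r !addr0.
Qed.

Lemma SkC_beyond_beta_recc k (bb t : R) :
  recc C `<=` recc (PB A b Bf) -> k \in N ->
  beta C xb (rb k) = bb%:E -> 0 <= bb -> bb < t ->
  SkC A b Bf C k (xb + t *: rb k) -> exists2 s, 0 < s & recc C (s *: rb k).
Proof.
move=> reccCP kN Eb bb0 bbt [c [l [d [c_hull [l0 [dC Ex]]]]]].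
have Et : t *: rb k = c + l *: rb k + d.
  by apply: (@addrI _ xb); rewrite Ex !addrA.
have [d0 Ed] := recc_PB_cone (reccCP _ dC).
have coord j : j \in N -> t * (j == k)%:R = c 0 j + l * (j == k)%:R + d 0 j.
  move=> jN; rewrite -(rbar_nonbasic A k jN).
  by have := congr1 (fun v : 'rV[R]_n => v 0 j) Et; rewrite !mxE.
have c0 j : j \in N -> 0 <= c 0 j.
  by move=> jN; apply: conv_hull_coord_ge c_hull => y /N2_segments_nonbasic; apply.
have ck : c 0 k <= bb.
  by apply: conv_hull_coord_le c_hull => y; apply: N2_segments_coord_le.
have dk : 0 < d 0 k by have := coord k kN; rewrite eqxx !mulr1; lra.
exists (d 0 k) => //.
suff <- : d = d 0 k *: rb k by [].
rewrite {1}Ed (bigD1 k) //= big1 ?addr0 // => j /andP[jN /negbTE jk].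
have := coord j jN; rewrite jk !mulr0 addr0 => /eqP; rewrite eq_sym.
by rewrite paddr_eq0 ?c0 ?d0 // => /andP[_ /eqP ->]; rewrite scale0r.
Qed.

End SkC.

Theorem proposition6 (R : realType) (m n : nat) (A : 'M[R]_(m, n))
  (b : 'cV[R]_m) (Bf : 'I_m -> 'I_n) (C : set 'rV[R]_n) (k : 'I_n) :
  \rank A = m ->
  injective Bf ->
  AB A Bf \in unitmx ->
  (forall i, 0 <= bbar A b Bf i 0) ->
  open C -> is_convex C ->
  ~ closure C (xbar A b Bf) ->
  recc C `<=` recc (PB A b Bf) ->
  N2 A b Bf C k ->
  ~ Jset A b Bf C k k /\ ~ recc (SkC A b Bf C k) (rbar A Bf k).
Proof.
move=> _ _ _ _ _ _ _ reccCP N2k.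
suff not_recc : ~ recc (SkC A b Bf C k) (rbar A Bf k) by split=> // -[_].
move=> recck; have [bb bb0 Eb] := N2_beta_gt0 N2k.
have [kN [_ [aoo [_ boo]]]] := N2k.
have far : SkC A b Bf C k (xbar A b Bf + (bb + 1) *: rbar A Bf k).
  by apply: recck; [exact: SkC_xbar | rewrite addr_ge0 // ltW].
have bb1 : bb < bb + 1 by rewrite ltrDl.
have [s s0 sC] := SkC_beyond_beta_recc reccCP kN Eb (ltW bb0) bb1 far.
by move: boo; rewrite (beta_recc_pinfty s0 sC aoo).
Qed.
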